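(* Let $\mathcal{A}$ be a finite set of positive integers, let $k$ be an odd positive integer, and let $w \leqslant z$ be real numbers. Then $$ S(\mathcal{A}, z) \leqslant \sum_{r=0}^{k-1} (-1)^r \frac{k-r}{k} \sum_{w \leqslant p_r < p_{r-1} < \cdots < p_1 < z} S\left(\mathcal{A}_{p_1 p_2 \cdots p_r}, w\right), $$ that is, $$ S(\mathcal{A}, z) \leqslant S(\mathcal{A}, w) - \frac{k-1}{k}\sum_{w \leqslant p_1 < z} S(\mathcal{A}_{p_1}, w) + \frac{k-2}{k}\sum_{w \leqslant p_2 < p_1 < z} S(\mathcal{A}_{p_1p_2}, w) - \frac{k-3}{k}\sum_{w \leqslant p_3<p_2 < p_1 < z} S(\mathcal{A}_{p_1p_2p_3}, w) + \cdots - \frac{2}{k}\sum_{w \leqslant p_{k-2}<\cdots < p_1 < z} S(\mathcal{A}_{p_1\cdots p_{k-2}}, w) + \frac{1}{k}\sum_{w \leqslant p_{k-1}<\cdots < p_1 < z} S(\mathcal{A}_{p_1\cdots p_{k-1}}, w), $$ where the $r=0$ term is $S(\mathcal{A}, w)$.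
   Context: Throughout, $p, p_1, p_2, \dots$ denote prime numbers. For a finite set $\mathcal{A}$ of positive integers and a positive integer $d$, $\mathcal{A}_d = \{a : ad \in \mathcal{A}\}$. For real $z$, $S(\mathcal{A}, z)$ denotes the number of $a \in \mathcal{A}$ with $\gcd\left(a, \prod_{p<z} p\right) = 1$, i.e. the number of elements of $\mathcal{A}$ having no prime factor less than $z$. *)

From mathcomp Require Import all_boot all_order all_algebra.
Set Implicit Arguments. Unset Strict Implicit. Unset Printing Implicit Defensive.
Import Order.TTheory GRing.Theory Num.Theory.
Local Open Scope ring_scope.

(* A finite set of positive integers is represented by a duplicate-free
   sequence of naturals, all positive. *)

Definition sieve_sub (A : seq nat) (d : nat) : seq nat :=
  [seq (a %/ d)%N | a <- A & (d %| a)%N].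

(* a has no prime factor less than z (primes dividing a > 0 are <= a) *)
Definition rough {R : numDomainType} (z : R) (a : nat) : bool :=
  [forall p : 'I_a.+1, (prime p && ((p : nat)%:R < z)) ==> ~~ (p %| a)%N].

Definition S {R : numDomainType} (A : seq nat) (z : R) : nat :=
  count (rough z) A.

Definition prime_chain {R : numDomainType} (w z : R) (n r : nat)
    (t : r.-tuple 'I_n) : bool :=
  all (fun p : 'I_n => prime p && (w <= (p : nat)%:R) && ((p : nat)%:R < z))
      (tval t)
  && sorted (fun p q : 'I_n => (q < p)%N) (tval t).

From mathcomp Require Import all_boot all_order all_algebra.
From mathcomp Require Import reals ring.
Import Order.TTheory GRing.Theory Num.Theory.
Local Open Scope ring_scope.

(* Both sides are sums over a \in A, so it suffices to compare the contribution
   of a single a. If a has a prime factor below w, so does every a / d with d a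
   product of primes >= w, and a contributes 0 to both sides. Otherwise let m be
   the number of primes in [w, z) dividing a: a contributes [m = 0] on the left
   and (1/k) sum_(r < k) (-1)^r (k - r) C(m, r) on the right, since the
   decreasing r-chains of such primes are the r-subsets of an m-set. By Abel
   summation and C(m+1, r) = C(m, r) + C(m, r-1), the last sum is k for m = 0,
   1 for m = 1 and (-1)^(k-1) C(m-2, k-1) >= 0 for m >= 2, as k is odd. *)

Lemma sum_alt_binomS (R : comPzRingType) m j :
  \sum_(r < j.+1) (-1) ^+ r * 'C(m.+1, r)%:R = (-1) ^+ j * 'C(m, j)%:R :> R.
Proof.
elim: j => [|j IHj]; first by rewrite big_ord1 !bin0.
by rewrite big_ord_recr /= IHj binS natrD exprS; ring.
Qed.

Lemma sum_weighted_alt_binom (R : comPzRingType) m k :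
  \sum_(r < k) (-1) ^+ r * (k - r)%:R * 'C(m, r)%:R =
  \sum_(j < k) \sum_(r < j.+1) (-1) ^+ r * 'C(m, r)%:R :> R.
Proof.
elim: k => [|k IHk]; first by rewrite !big_ord0.
rewrite [RHS]big_ord_recr /= -IHk.
have -> : \sum_(r < k) (-1) ^+ r * (k - r)%:R * 'C(m, r)%:R =
          \sum_(r < k.+1) (-1) ^+ r * (k - r)%:R * 'C(m, r)%:R :> R.
  by rewrite big_ord_recr /= subnn mulr0 mul0r addr0.
rewrite -big_split /=; apply: eq_bigr => i _.
by rewrite subSn 1?mulrSr; [ring | rewrite -ltnS].
Qed.

Lemma sum_weighted_alt_binomS (R : comPzRingType) m k :
  \sum_(r < k) (-1) ^+ r * (k - r)%:R * 'C(m.+1, r)%:R =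
  \sum_(j < k) (-1) ^+ j * 'C(m, j)%:R :> R.
Proof.
by rewrite sum_weighted_alt_binom; apply: eq_bigr => j _; rewrite sum_alt_binomS.
Qed.

Lemma weighted_alt_binom_ge_eq0 (R : numFieldType) m k : odd k ->
  (m == 0)%:R <= \sum_(r < k) (-1) ^+ r * ((k - r)%:R / k%:R) * 'C(m, r)%:R :> R.
Proof.
case: k => [//|k] /= even_k.
have -> : \sum_(r < k.+1) (-1) ^+ r * ((k.+1 - r)%:R / k.+1%:R) * 'C(m, r)%:R =
          (\sum_(r < k.+1) (-1) ^+ r * (k.+1 - r)%:R * 'C(m, r)%:R) / k.+1%:R :> R.
  by rewrite mulr_suml; apply: eq_bigr => r _; rewrite mulrA mulrAC.
rewrite ler_pdivlMr ?ltr0n //.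
case: m => [|[|m]].
- rewrite big_ord_recl /= big1 ?addr0 => [|r _]; rewrite ?bin0n ?mulr0 //.
  by rewrite expr0 subn0 !mul1r mulr1.
- rewrite (sum_weighted_alt_binomS _ 0) big_ord_recl big1 ?bin0 => [|r _];
    rewrite ?bin0n ?mulr0 //.
  by rewrite mul0r expr0 mulr1 addr0 ler01.
- rewrite (sum_weighted_alt_binomS _ m.+1) sum_alt_binomS.
  rewrite -signr_odd (negbTE even_k) mul0r mul1r.
  exact: ler0n.
Qed.

Section Rough.
Context {R : numDomainType}.
Implicit Types (w z : R) (a d : nat).

Lemma roughP {w a} : (0 < a)%N ->
  reflect (forall p, prime p -> p%:R < w -> ~~ (p %| a)%N) (rough w a).
Proof.
move=> a_gt0; apply: (iffP forallP) => [small_ndvd p p_pr p_lt | small_ndvd p].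
  apply/negP => p_dvd; have p_le : (p < a.+1)%N by rewrite ltnS dvdn_leq.
  by have := small_ndvd (Ordinal p_le); rewrite /= p_pr p_lt p_dvd.
by apply/implyP => /andP[p_pr p_lt]; apply: small_ndvd.
Qed.

Lemma rough_le w z a : w <= z -> rough z a -> rough w a.
Proof.
move=> le_wz /forallP rough_z; apply/forallP => p; apply/implyP => /andP[p_pr p_lt].
by apply: (implyP (rough_z p)); rewrite p_pr (lt_le_trans p_lt le_wz).
Qed.

Lemma rough_prod w (I : eqType) (s : seq I) (f : I -> nat) :
  all (fun i => prime (f i) && (w <= (f i)%:R)) s -> rough w (\prod_(i <- s) f i)%N.
Proof.
move=> /allP large_primes.
have prod_gt0 : (0 < \prod_(i <- s) f i)%N.
  by rewrite big_seq_cond prodn_cond_gt0 // => i /andP[/large_primes/andP[/prime_gt0]].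
apply/(roughP prod_gt0) => p p_pr p_lt; rewrite Euclid_dvd_prod // big_has.
apply/hasPn => i /large_primes /andP[fi_pr le_w_fi]; rewrite dvdn_prime2 //.
by apply: contraTN p_lt => /eqP ->; rewrite le_gtF.
Qed.

Lemma rough_divn w a d : (0 < a)%N -> (d %| a)%N -> rough w d ->
  rough w (a %/ d) = rough w a.
Proof.
move=> a_gt0 d_dvd rough_d.
have d_gt0 : (0 < d)%N by apply: dvdn_gt0 a_gt0 _.
have ad_gt0 : (0 < a %/ d)%N by rewrite divn_gt0 // dvdn_leq.
apply/(roughP ad_gt0)/(roughP a_gt0) => small_ndvd p p_pr p_lt.
  have := small_ndvd p p_pr p_lt; apply: contra => p_dvd_a.
  have p_ndvd_d := roughP d_gt0 rough_d p p_pr p_lt.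
  by rewrite -(divnK d_dvd) Euclid_dvdM // (negbTE p_ndvd_d) orbF in p_dvd_a.
by apply: contra (small_ndvd p p_pr p_lt) => /dvdn_trans; apply; apply: dvdn_div.
Qed.
End Rough.

Lemma ord_gtn_trans n : transitive (fun p q : 'I_n => (q < p)%N).
Proof. by move=> p q s /= lt_pq lt_sp; apply: ltn_trans lt_sp lt_pq. Qed.

Lemma ord_gtn_irr n : irreflexive (fun p q : 'I_n => (q < p)%N).
Proof. by move=> p; apply: ltnn. Qed.

Lemma dvdn_prod_primes (I : eqType) (s : seq I) (f : I -> nat) a :
  uniq (map f s) -> all (fun i => prime (f i)) s ->
  (\prod_(i <- s) f i %| a)%N = all (fun i => f i %| a)%N s.
Proof.
elim: s => [|i s IHs] /=; first by rewrite big_nil dvd1n.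
move=> /andP[fi_notin uniq_s] /andP[fi_pr primes_s].
suff fi_coprime : coprime (f i) (\prod_(j <- s) f j).
  by rewrite big_cons Gauss_dvd // IHs.
rewrite prime_coprime // Euclid_dvd_prod // big_has; apply/hasPn => j js.
rewrite dvdn_prime2 ?(allP primes_s j js) //.
by apply: contraNN fi_notin => /eqP ->; apply: map_f.
Qed.

Lemma card_decreasing_tuples n r (P : {set 'I_n}) :
  #|[set t : r.-tuple 'I_n | all (mem P) t && sorted (fun p q : 'I_n => (q < p)%N) t]|
  = 'C(#|P|, r).
Proof.
rewrite -cards_draws.
have [gt_trans gt_irr] := (@ord_gtn_trans n, @ord_gtn_irr n).
rewrite -(@card_in_imset _ _ (fun t : r.-tuple 'I_n => [set i in t])); last first.
  move=> t1 t2; rewrite !inE => /andP[_ sorted_t1] /andP[_ sorted_t2] eq_t12.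
  apply: val_inj; apply: (irr_sorted_eq gt_trans gt_irr sorted_t1 sorted_t2) => p.
  by have := congr1 (fun X : {set 'I_n} => p \in X) eq_t12; rewrite !inE.
apply: eq_card => X; rewrite inE.
apply/imsetP/andP => [[t] | [sub_XP /eqP card_X]].
  rewrite inE => /andP[t_in_P sorted_t] ->; split.
    by apply/subsetP => p; rewrite inE => /(allP t_in_P).
  rewrite cardsE (card_uniqP _) ?size_tuple //.
  exact: sorted_uniq gt_trans gt_irr _ sorted_t.
have size_X : size (rev (enum X)) == r by rewrite size_rev -cardE card_X.
exists (Tuple size_X); last by apply/setP => p; rewrite inE /= mem_rev mem_enum.
rewrite inE /=; apply/andP; split.
  by apply/allP => p; rewrite mem_rev mem_enum => /(subsetP sub_XP).
have : sorted ltn (map val (enum X)).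
  rewrite -[enum _](eq_filter (mem_enum _)) -(eq_filter (mem_map val_inj _)).
  by rewrite -filter_map (sorted_filter ltn_trans) // unlock val_ord_enum iota_ltn_sorted.
by rewrite rev_sorted sorted_map.
Qed.

Definition large_prime_divisors {R : numDomainType} (w z : R) n a : {set 'I_n} :=
  [set p : 'I_n | prime p && (w <= (p : nat)%:R) && ((p : nat)%:R < z) && (p %| a)%N].

Lemma card_prime_chain_dvdn (R : numDomainType) (w z : R) n r a :
  #|[set t : r.-tuple 'I_n | prime_chain w z t && (\prod_(p <- tval t) (p : nat) %| a)%N]|
  = 'C(#|large_prime_divisors w z n a|, r).
Proof.
rewrite -card_decreasing_tuples; apply: eq_card => t; rewrite !inE /prime_chain.
have [sorted_t|] := boolP (sorted _ _); rewrite ?andbF ?andbT //.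
have uniq_t : uniq (map val (tval t)).
  rewrite map_inj_uniq; last exact: val_inj.
  exact: sorted_uniq (@ord_gtn_trans n) (@ord_gtn_irr n) _ sorted_t.
have -> : all (mem (large_prime_divisors w z n a)) t =
          all (fun p : 'I_n => prime p && (w <= (p : nat)%:R) && ((p : nat)%:R < z)) t
          && all (fun p : 'I_n => (p %| a)%N) t.
  by rewrite -all_predI; apply: eq_all => p; rewrite /= inE.
have [chain_t|] := boolP (all _ _) => //=.
by rewrite dvdn_prod_primes //; apply: sub_all chain_t => p /andP[/andP[]].
Qed.

Lemma rough_eq_large_prime_divisors0 {R : archiRealDomainType} (w z : R) a :
  (0 < a)%N -> rough w a ->
  rough z a = (#|large_prime_divisors w z (Num.truncn z).+1 a| == 0)%N.
Proof.
move=> a_gt0 rough_w; rewrite cards_eq0; apply/(roughP a_gt0)/eqP.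
  move=> small_ndvd; apply/setP => p; rewrite !inE.
  apply/negP => /andP[/andP[/andP[p_pr _] p_lt] p_dvd].
  by case/negP: (small_ndvd p p_pr p_lt).
move=> no_divisor p p_pr p_lt_z; apply/negP => p_dvd.
have [p_lt_w | le_w_p] := ltP p%:R w.
  by case/negP: (roughP a_gt0 rough_w p p_pr p_lt_w).
have p_lt_n : (p < (Num.truncn z).+1)%N.
  by rewrite ltnS -[p in (p <= _)%N](@natrK R) le_truncn // ltW.
have := in_set0 (Ordinal p_lt_n); rewrite -no_divisor !inE /=.
by rewrite p_pr le_w_p p_lt_z p_dvd.
Qed.

Lemma natr_count (R : pzSemiRingType) (T : Type) (P : pred T) (s : seq T) :
  (count P s)%:R = \sum_(x <- s) (P x)%:R :> R.
Proof.
rewrite -sum1_count natr_sum big_mkcond /=.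
by apply: eq_bigr => x _; case: (P x).
Qed.

Lemma natr_card_setI (R : pzSemiRingType) (T : finType) (P Q : pred T) :
  \sum_(x | P x) (Q x)%:R = #|[set x | P x && Q x]|%:R :> R.
Proof.
rewrite -sum1_card natr_sum big_mkcond [RHS]big_mkcond /=.
by apply: eq_bigr => x _; rewrite inE; case: (P x); case: (Q x).
Qed.

Lemma count_sieve_sub {R : numDomainType} (A : seq nat) d (w : R) :
  S (sieve_sub A d) w = count (fun a => (d %| a)%N && rough w (a %/ d)%N) A.
Proof.
by rewrite /S /sieve_sub count_map count_filter; apply: eq_count => a; rewrite andbC.
Qed.

Lemma rough_le_sieve_weights (R : archiRealFieldType) (k : nat) (w z : R) a :
  (0 < a)%N -> odd k -> w <= z ->
  (rough z a)%:R <= \sum_(r < k) (-1) ^+ r * ((k - r)%:R / k%:R) *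
      \sum_(t : r.-tuple 'I_(Num.truncn z).+1 | prime_chain w z t)
        ((\prod_(p <- tval t) (p : nat) %| a)%N
          && rough w (a %/ \prod_(p <- tval t) (p : nat))%N)%:R :> R.
Proof.
move=> a_gt0 odd_k le_wz; set n := (Num.truncn z).+1.
have chain_term r (t : r.-tuple 'I_n) : prime_chain w z t ->
    (\prod_(p <- tval t) (p : nat) %| a)%N
      && rough w (a %/ \prod_(p <- tval t) (p : nat))%N
    = (\prod_(p <- tval t) (p : nat) %| a)%N && rough w a.
  case/andP=> chain_t _; have [d_dvd|] //= := boolP (_ %| a)%N.
  apply: rough_divn => //; apply: rough_prod.
  by apply: sub_all chain_t => p /andP[/andP[-> ->]].
have inner_sum r : \sum_(t : r.-tuple 'I_n | prime_chain w z t)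
    ((\prod_(p <- tval t) (p : nat) %| a)%N
      && rough w (a %/ \prod_(p <- tval t) (p : nat))%N)%:R
    = (rough w a)%:R * 'C(#|large_prime_divisors w z n a|, r)%:R :> R.
  under eq_bigr => t chain_t do rewrite (chain_term r t chain_t).
  have [_|_] := boolP (rough w a); last by rewrite mul0r big1 // => t _; rewrite andbF.
  under eq_bigr do rewrite andbT.
  by rewrite mul1r natr_card_setI card_prime_chain_dvdn.
under eq_bigr => r _ do rewrite inner_sum.
have [rough_w|not_rough_w] := boolP (rough w a); last first.
  rewrite (negbTE (contra (rough_le w z a le_wz) not_rough_w)) big1 // => r _.
  by rewrite mul0r mulr0.
rewrite (rough_eq_large_prime_divisors0 w z a a_gt0 rough_w).
under eq_bigr do rewrite mul1r.
exact: weighted_alt_binom_ge_eq0.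
Qed.

Theorem theorem1 (R : realType) (A : seq nat) (k : nat) (w z : R) :
  uniq A -> all (fun a => (0 < a)%N) A ->
  odd k -> w <= z ->
  (S A z)%:R <=
    \sum_(r < k)
      (-1) ^+ r * ((k - r)%:R / k%:R) *
      \sum_(t : r.-tuple 'I_(Num.truncn z).+1 | prime_chain w z t)
        (S (sieve_sub A (\prod_(p <- tval t) (p : nat))%N) w)%:R :> R.
Proof.
(* S counts A with multiplicity on both sides. *)
move=> _ /allP A_gt0 odd_k le_wz.
under eq_bigr => r _ do under eq_bigr => t _ do rewrite count_sieve_sub natr_count.
under eq_bigr => r _ do rewrite exchange_big mulr_sumr.
rewrite exchange_big /S natr_count !big_seq ler_sum // => a a_in_A.
exact: rough_le_sieve_weights (A_gt0 a a_in_A) odd_k le_wz.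
Qed.
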